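(* There exists a constant $\mu$ with $0<\mu<1/2$ such that for every $r>0$ the spiral $\gamma:\mathbb{R}\to\mathbb{R}^3$, $\gamma(t)=(r\cos t,\,r\sin t,\,\mu r t)$, is self-expanded (and hence satisfies the $\lambda$-cone property for all $\lambda\in[0,1)$).
   Context: $\mathbb{R}^3$ carries the Euclidean inner product $\langle\cdot,\cdot\rangle$ and norm $\|\cdot\|$. A curve $\gamma$ defined on an interval is self-expanded if for all $t_1\le t_2\le t_3$: $\|\gamma(t_1)-\gamma(t_2)\|\le\|\gamma(t_1)-\gamma(t_3)\|$. A differentiable curve with nonvanishing derivative satisfies the $\lambda$-cone property if for all $t<\tau$: $\langle\gamma'(\tau),\gamma(t)-\gamma(\tau)\rangle\le\lambda\|\gamma'(\tau)\|\|\gamma(t)-\gamma(\tau)\|$. *)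

From Stdlib Require Import Reals Lra.
Open Scope R_scope.

Definition vec3 : Type := (R * R * R)%type.

Definition v3x (v : vec3) : R := fst (fst v).
Definition v3y (v : vec3) : R := snd (fst v).
Definition v3z (v : vec3) : R := snd v.

Definition v3sub (u v : vec3) : vec3 :=
  (v3x u - v3x v, v3y u - v3y v, v3z u - v3z v).

Definition inner3 (u v : vec3) : R :=
  v3x u * v3x v + v3y u * v3y v + v3z u * v3z v.

Definition norm3 (u : vec3) : R := sqrt (inner3 u u).

Definition self_expanded (g : R -> vec3) : Prop :=
  forall t1 t2 t3 : R, t1 <= t2 -> t2 <= t3 ->
    norm3 (v3sub (g t1) (g t2)) <= norm3 (v3sub (g t1) (g t3)).

Definition is_deriv3 (g g' : R -> vec3) : Prop :=
  forall t : R,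
    derivable_pt_lim (fun s => v3x (g s)) t (v3x (g' t)) /\
    derivable_pt_lim (fun s => v3y (g s)) t (v3y (g' t)) /\
    derivable_pt_lim (fun s => v3z (g s)) t (v3z (g' t)).

Definition cone_property (lam : R) (g : R -> vec3) : Prop :=
  exists g' : R -> vec3,
    is_deriv3 g g' /\
    (forall t : R, g' t <> (0, 0, 0)) /\
    (forall t tau : R, t < tau ->
       inner3 (g' tau) (v3sub (g t) (g tau))
         <= lam * norm3 (g' tau) * norm3 (v3sub (g t) (g tau))).

Definition spiral (r mu : R) (t : R) : vec3 :=
  (r * cos t, r * sin t, mu * r * t).

(* Write a = t2 - t1.  The squared chord of the spiral is r^2 (2 - 2 cos a + mu^2 a^2),
   whose derivative in a is 2 (sin a + mu^2 a), and the inner product of the tangent at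
   tau with the chord back to t < tau is -r^2 (sin (tau - t) + mu^2 (tau - t)).  So both
   self-expansion and the cone property (with the left-hand side even <= 0) reduce to
   sin s + mu^2 s >= 0 for s >= 0.  Since min_{s > 0} sin s / s is about -0.2172, this
   holds for mu = 49/100, where mu^2 = 0.2401. *)
From Stdlib Require Import Reals Lra Psatz.
From Coquelicot Require Import Coquelicot.
Open Scope R_scope.

Lemma sin_le_taylor5 (u : R) : 0 <= u <= 4 -> sin u <= u - u ^ 3 / 6 + u ^ 5 / 120.
Proof.
intro Hu; destruct (pre_sin_bound u 0) as [_ Hle]; [lra | lra |].
replace (u - u ^ 3 / 6 + u ^ 5 / 120) with (sin_approx u (2 * (0 + 1))); [exact Hle |].
unfold sin_approx, sin_term; simpl; field.
Qed.

Lemma sin_le_affine (u : R) : 0 <= u <= 117 / 100 -> sin u <= 2401 / 10000 * (u + 3).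
Proof.
intro Hu.
assert (Hu5 : u ^ 5 <= u ^ 3 * (117 / 100) ^ 2).
{ replace (u ^ 5) with (u ^ 3 * u ^ 2) by ring.
  apply Rmult_le_compat_l; [apply pow_le | apply pow_incr]; lra. }
(* With k = 1/6 - 1.17^2/120, the cubic 0.7599 u - k u^3 is increasing on [0, 1.17]:
   this is its increment from u to 1.17. *)
assert (0 <= (117 / 100 - u) * (7599 / 10000 - (1 / 6 - (117 / 100) ^ 2 / 120)
                                                 * (u ^ 2 + 117 / 100 * u + (117 / 100) ^ 2)))
  by (apply Rmult_le_pos; nra).
pose proof (sin_le_taylor5 u ltac:(lra)); nra.
Qed.

Lemma sin_add_linear_nonneg (c s : R) :
  2401 / 10000 <= c -> 0 <= s -> 0 <= sin s + c * s.
Proof.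
intros Hc Hs.
assert (Hcs : 2401 / 10000 * s <= c * s) by (apply Rmult_le_compat_r; lra).
assert (HPI : 3 < PI) by (pose proof PI2_3_2; lra).
destruct (Rle_lt_dec s PI) as [HsPI | HsPI].
- pose proof (sin_ge_0 s Hs HsPI); lra.
- destruct (Rle_lt_dec s (PI + 117 / 100)) as [Hs117 | Hs117].
  + assert (Hsin : sin s = - sin (s - PI)).
    { rewrite sin_minus, sin_PI, cos_PI; ring. }
    pose proof (sin_le_affine (s - PI) ltac:(lra)); lra.
  + pose proof (SIN_bound s); lra.
Qed.

Definition spiral_chord_sq (mu a : R) : R := 2 - 2 * cos a + mu ^ 2 * a ^ 2.

Lemma spiral_chord_sq_le (mu a b : R) :
  (forall s, 0 <= s -> 0 <= sin s + mu ^ 2 * s) ->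
  0 <= a -> a <= b -> spiral_chord_sq mu a <= spiral_chord_sq mu b.
Proof.
intros Hsin Ha Hab.
destruct (Req_dec a b) as [-> | Hne]; [lra |].
destruct (MVT_cor2 (spiral_chord_sq mu) (fun x => 2 * (sin x + mu ^ 2 * x)) a b)
  as [c [Hmvt Hc]]; [lra | |].
- intros x _; apply is_derive_Reals; unfold spiral_chord_sq.
  auto_derive; [exact I | ring].
- pose proof (Hsin c ltac:(lra)); nra.
Qed.

Section Spiral.
Variables r mu : R.

Definition spiral_tangent (t : R) : vec3 := (- r * sin t, r * cos t, mu * r).

Lemma spiral_is_deriv3 : is_deriv3 (spiral r mu) spiral_tangent.
Proof.
intro t; unfold spiral, spiral_tangent, v3x, v3y, v3z; simpl.
repeat split; apply is_derive_Reals; auto_derive; try exact I; ring.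
Qed.

Lemma spiral_tangent_neq0 (t : R) : r <> 0 -> spiral_tangent t <> (0, 0, 0).
Proof.
intros Hr E; injection E as Hx Hy _.
pose proof (sin2_cos2 t); unfold Rsqr in *.
assert (sin t = 0) by (apply (Rmult_eq_reg_l (- r)); lra).
assert (cos t = 0) by (apply (Rmult_eq_reg_l r); lra).
nra.
Qed.

Lemma spiral_chord_inner (t1 t2 : R) :
  inner3 (v3sub (spiral r mu t1) (spiral r mu t2))
         (v3sub (spiral r mu t1) (spiral r mu t2))
  = r ^ 2 * spiral_chord_sq mu (t2 - t1).
Proof.
unfold inner3, v3sub, spiral, spiral_chord_sq, v3x, v3y, v3z; simpl.
rewrite cos_minus.
transitivity (r ^ 2 * ((sin t1)² + (cos t1)² + ((sin t2)² + (cos t2)²)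
                       - 2 * (cos t2 * cos t1 + sin t2 * sin t1) + mu ^ 2 * (t2 - t1) ^ 2)).
- unfold Rsqr; ring.
- rewrite !sin2_cos2; ring.
Qed.

Lemma spiral_tangent_inner_chord (t tau : R) :
  inner3 (spiral_tangent tau) (v3sub (spiral r mu t) (spiral r mu tau))
  = - r ^ 2 * (sin (tau - t) + mu ^ 2 * (tau - t)).
Proof.
unfold inner3, v3sub, spiral, spiral_tangent, v3x, v3y, v3z; simpl.
rewrite sin_minus; ring.
Qed.

Hypothesis sin_add_mu2_nonneg : forall s, 0 <= s -> 0 <= sin s + mu ^ 2 * s.

Lemma spiral_self_expanded : self_expanded (spiral r mu).
Proof.
intros t1 t2 t3 H12 H23; unfold norm3; apply sqrt_le_1_alt.
rewrite !spiral_chord_inner.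
apply Rmult_le_compat_l; [apply pow2_ge_0 |].
apply spiral_chord_sq_le; [exact sin_add_mu2_nonneg | lra | lra].
Qed.

Lemma spiral_cone_property (lam : R) :
  r <> 0 -> 0 <= lam -> cone_property lam (spiral r mu).
Proof.
intros Hr Hlam; exists spiral_tangent.
split; [exact spiral_is_deriv3 | split; [intro t; exact (spiral_tangent_neq0 t Hr) |]].
intros t tau Htt; rewrite spiral_tangent_inner_chord.
pose proof (sin_add_mu2_nonneg (tau - t) ltac:(lra)).
assert (0 <= lam * norm3 (spiral_tangent tau)
                  * norm3 (v3sub (spiral r mu t) (spiral r mu tau))).
{ unfold norm3; repeat apply Rmult_le_pos; auto using sqrt_pos. }
nra.
Qed.

End Spiral.

Theorem lemma4p4 :
  exists mu : R, 0 < mu < 1 / 2 /\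
    forall r : R, 0 < r ->
      self_expanded (spiral r mu) /\
      (forall lam : R, 0 <= lam < 1 -> cone_property lam (spiral r mu)).
Proof.
exists (49 / 100); split; [lra |].
assert (Hsin : forall s, 0 <= s -> 0 <= sin s + (49 / 100) ^ 2 * s).
{ intros s Hs; apply sin_add_linear_nonneg; lra. }
intros r Hr; split.
- exact (spiral_self_expanded r _ Hsin).
- intros lam Hlam; apply (spiral_cone_property r _ Hsin); lra.
Qed.
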